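(* Let $K$ be a field with an absolute value $v$, and let $\mathbb{C}_v$ denote the completion of an algebraic closure of $K$. Let $\phi(z)\in K[z]$ be a polynomial of degree $d\geq 2$, and let $\hat{\lambda}_{v,\phi}$ be the associated local canonical height. Write $\phi(z)=a_d z^d+\cdots+a_1 z+a_0=a_d(z-\alpha_1)\cdots(z-\alpha_d)$ with $a_i\in K$, $a_d\neq 0$, and $\alpha_i\in\mathbb{C}_v$. Let $A=\max\{|\alpha_i|_v : i=1,\ldots,d\}$ and $B=|a_d|_v^{-1/d}$, and define real constants $c_v,C_v\geq 1$ by $$c_v=\max\{1,A,B\}\quad\text{and}\quad C_v=\max\{1,|a_0|_v,|a_1|_v,\ldots,|a_d|_v\}$$ if $v$ is non-archimedean, or $$c_v=\max\{1,A+B\}\quad\text{and}\quad C_v=\max\{1,|a_0|_v+|a_1|_v+\cdots+|a_d|_v\}$$ if $v$ is archimedean. Then for all $x\in\mathbb{C}_v$, $$\frac{-d\log c_v}{d-1}\leq \hat{\lambda}_{v,\phi}(x)-\lambda_v(x)\leq \frac{\log C_v}{d-1}.$$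
   Context: The standard local height is $\lambda_v:\mathbb{C}_v\to[0,\infty)$, $\lambda_v(x)=\log\max\{1,|x|_v\}$. For a polynomial $\phi\in K[z]$ of degree $d\geq 2$, the local canonical height is $\hat{\lambda}_{v,\phi}(x)=\lim_{n\to\infty}d^{-n}\lambda_v(\phi^n(x))$ for $x\in\mathbb{C}_v$ (this limit exists), where $\phi^n$ denotes the $n$-th iterate of $\phi$ under composition. *)

From HB Require Import structures.
From mathcomp Require Import all_boot all_order all_algebra.
From mathcomp Require Import all_classical all_reals all_analysis.
Set Implicit Arguments. Unset Strict Implicit. Unset Printing Implicit Defensive.
Import Order.TTheory GRing.Theory Num.Theory.
Import numFieldNormedType.Exports.
Local Open Scope ring_scope.

Definition is_absval (R : realType) (F : fieldType) (av : F -> R) : Prop :=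
  [/\ forall x, 0 <= av x,
      forall x, av x = 0 <-> x = 0,
      forall x y, av (x * y) = av x * av y
    & forall x y, av (x + y) <= av x + av y].

Definition nonarch (R : realType) (F : fieldType) (av : F -> R) : Prop :=
  forall x y, av (x + y) <= Num.max (av x) (av y).

Definition av_complete (R : realType) (F : fieldType) (av : F -> R) : Prop :=
  forall u : nat -> F,
    (forall e : R, 0 < e -> exists N, forall m n, (N <= m)%N -> (N <= n)%N ->
        av (u m - u n) < e) ->
    exists l : F, forall e : R, 0 < e -> exists N, forall n, (N <= n)%N ->
        av (u n - l) < e.

Definition algebraic_over (K L : fieldType) (s : {rmorphism K -> L}) (y : L) : Prop :=
  exists p : {poly K}, p != 0 /\ root (map_poly s p) y.

(* L is (isomorphic to) C_v: an algebraically closed field with absolute value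
   av, complete, extending (K, av \o s), in which the algebraic closure of K is dense. *)
Definition is_Cv (R : realType) (K : fieldType) (L : closedFieldType)
    (s : {rmorphism K -> L}) (av : L -> R) : Prop :=
  [/\ is_absval av, av_complete av &
      forall x : L, forall e : R, 0 < e ->
        exists y : L, algebraic_over s y /\ av (x - y) < e].

Definition loc_height (R : realType) (L : fieldType) (av : L -> R) (x : L) : R :=
  ln (Num.max 1 (av x)).

Definition can_height (R : realType) (L : fieldType) (av : L -> R)
    (phi : {poly L}) (x : L) : R :=
  limn (fun n : nat => ((size phi).-1%:R ^- n) * loc_height av (iter n (fun z => phi.[z]) x)).

From HB Require Import structures.
From mathcomp Require Import all_boot all_order all_algebra.
From mathcomp Require Import all_classical all_reals all_analysis.
From mathcomp Require Import ring lra.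
Import Order.TTheory GRing.Theory Num.Theory.
Import numFieldNormedType.Exports.
Set Implicit Arguments. Unset Strict Implicit. Unset Printing Implicit Defensive.
Local Open Scope ring_scope.
Local Open Scope classical_set_scope.

(* Passing to logarithms, [h y := log max(1, |y|)] satisfies
   [d h(y) - d log c <= h(phi y) <= log C + d h(y)]: the upper bound is the
   triangle inequality on the coefficients, the lower one comes from the
   factorisation [phi = a_d prod (z - alpha_i)], since for [|y| > c] each
   [|y - alpha_i|] is at least a fixed fraction of [|y|].  Adding a geometric
   correction makes [d^-n h(phi^n x)] monotone, hence convergent, and the
   accumulated errors sum to [log C / (d - 1)] and [d log c / (d - 1)].
   Non-archimedean on [K] implies non-archimedean on [C_v], since an absolute
   value bounded on the integers is ultrametric. *)

Lemma bernoulli_ineq (R : realFieldType) (h : R) n :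
  0 <= h -> 1 + n%:R * h <= (1 + h) ^+ n.
Proof.
move=> h0; elim: n => [|n IH]; first by rewrite mul0r addr0 expr0.
rewrite exprS -natr1.
have n0 : 0 <= n%:R :> R by [].
set p := (1 + h) ^+ n in IH *; set N := n%:R in IH n0 *.
nra.
Qed.

(* If [M < t], Bernoulli's inequality for [r := t / M = 1 + h] gives
   [r ^+ (n + n) >= (n h) ^+ 2], which eventually exceeds [(n + n).+1]. *)
Lemma le_of_exprn_le_linear (R : archiRealFieldType) (t M : R) :
  0 <= M -> (forall n, t ^+ n <= n.+1%:R * M ^+ n) -> t <= M.
Proof.
move=> M0 htM; rewrite leNgt; apply/negP => Mt.
have [M_eq0|M_neq0] := eqVneq M 0.
  by have := htM 1%N; rewrite M_eq0 !expr1 mulr0; lra.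
have M_gt0 : 0 < M by rewrite lt_def M_neq0 M0.
set r := t / M.
have r_gt1 : 1 < r by rewrite /r ltr_pdivlMr // mul1r.
have rX_le n : r ^+ n <= n.+1%:R.
  by rewrite /r expr_div_n ler_pdivrMr ?exprn_gt0 // htM.
set h := r - 1.
have h0 : 0 < h by rewrite /h subr_gt0.
pose n := (Num.Def.archi_bound (3 / (h * h))).+1.
have nb : 3 < n%:R * (h * h).
  rewrite -ltr_pdivrMr ?mulr_gt0 //.
  apply: lt_le_trans (archi_boundP _) _; first by rewrite divr_ge0 ?mulr_ge0 // ltW.
  by rewrite ler_nat.
have b := @bernoulli_ineq _ h n (ltW h0).
have r2n := rX_le (n + n)%N.
rewrite exprD -natr1 natrD in r2n.
have e1 : 1 + h = r by rewrite /h; ring.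
rewrite e1 in b.
have n1 : 1 <= n%:R :> R by rewrite ler1n.
set N := n%:R in nb n1 b r2n; set P := r ^+ n in b r2n.
have q0 : 0 <= N * h by nra.
have q2 : (N * h) * (N * h) <= P * P by apply: ler_pM => //; nra.
nra.
Qed.

Section AbsoluteValue.
Variables (R : realType) (L : fieldType) (av : L -> R).
Hypothesis hav : is_absval av.

Lemma av_ge0 x : 0 <= av x. Proof. by case: hav. Qed.
Lemma av_eq0 x : av x = 0 <-> x = 0. Proof. by case: hav. Qed.
Lemma avM x y : av (x * y) = av x * av y. Proof. by case: hav. Qed.
Lemma avD x y : av (x + y) <= av x + av y. Proof. by case: hav. Qed.
Lemma av0 : av 0 = 0. Proof. exact/av_eq0. Qed.

Lemma av1 : av 1 = 1.
Proof.
have h := avM 1 1; rewrite mulr1 in h.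
have n0 : av 1 != 0 by apply/eqP => /av_eq0/eqP; rewrite oner_eq0.
by apply: (mulfI n0); rewrite -h mulr1.
Qed.

Lemma avX x n : av (x ^+ n) = av x ^+ n.
Proof. by elim: n => [|n IH]; rewrite ?expr0 ?av1 // !exprS avM IH. Qed.

Lemma av_gt0 x : x != 0 -> 0 < av x.
Proof. by move=> x0; rewrite lt_def av_ge0 andbT; apply: contra x0 => /eqP/av_eq0->. Qed.

Lemma av_subr_ge x y : av x - av y <= av (x - y).
Proof. have := avD (x - y) y; rewrite subrK; lra. Qed.

Lemma av_sum n (F : 'I_n -> L) : av (\sum_(i < n) F i) <= \sum_(i < n) av (F i).
Proof.
elim/big_rec2: _ => [|i y1 y2 _ h]; first by rewrite av0.
by apply: le_trans (avD _ _) _; rewrite lerD2l.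
Qed.

Lemma av_prod (I : Type) (r : seq I) (F : I -> L) :
  av (\prod_(a <- r) F a) = \prod_(a <- r) av (F a).
Proof. exact: (big_morph av avM av1). Qed.

Lemma av_sum_nonarch n (F : 'I_n -> L) (X : R) : nonarch av -> 0 <= X ->
  (forall i, av (F i) <= X) -> av (\sum_(i < n) F i) <= X.
Proof.
move=> na X0 hF; elim/big_rec: _ => [|i y _ h]; first by rewrite av0.
by apply: le_trans (na _ _) _; rewrite ge_max hF h.
Qed.

Lemma av_subr_nonarch x a : nonarch av -> av a < av x -> av x <= av (x - a).
Proof.
move=> na ax; have := na (x - a) a; rewrite subrK le_max.
by case/orP => // /(lt_le_trans ax); rewrite ltxx.
Qed.

Section NatBounded.
Hypothesis av_natr_le1 : forall n : nat, av n%:R <= 1.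

Lemma av_addX_le x y n :
  av ((x + y) ^+ n) <= n.+1%:R * Num.max (av x) (av y) ^+ n.
Proof.
set M := Num.max (av x) (av y).
have [xM yM] : av x <= M /\ av y <= M by rewrite !le_max !lexx orbT.
rewrite exprDn; apply: le_trans; first exact: av_sum.
have -> : n.+1%:R * M ^+ n = \sum_(i < n.+1) M ^+ n.
  by rewrite sumr_const card_ord mulr_natl.
apply: ler_sum => i _.
have hi : (i <= n)%N by rewrite -ltnS.
have -> : M ^+ n = M ^+ (n - i) * M ^+ i by rewrite -exprD subnK.
rewrite -mulr_natr !avM !avX -[leRHS]mulr1.
apply: ler_pM; rewrite ?mulr_ge0 ?exprn_ge0 ?av_ge0 //.
by apply: ler_pM; rewrite ?exprn_ge0 ?av_ge0 // lerXn2r ?nnegrE ?av_ge0 // (le_trans (av_ge0 x)).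
Qed.

Lemma nonarch_of_av_natr_le1 : nonarch av.
Proof.
move=> x y; apply: le_of_exprn_le_linear; first by rewrite le_max av_ge0.
by move=> n; rewrite -avX; apply: av_addX_le.
Qed.

End NatBounded.

End AbsoluteValue.

Lemma nonarch_rmorph (R : realType) (K L : fieldType) (s : {rmorphism K -> L})
    (av : L -> R) :
  is_absval av -> nonarch (av \o s) -> nonarch av.
Proof.
move=> hav na; apply: nonarch_of_av_natr_le1 => // n.
rewrite -(rmorph_nat s); elim: n => [|n IH]; first by rewrite rmorph0 av0 ?ler01.
by rewrite -natr1 (le_trans (na _ _)) // ge_max IH /= rmorph1 av1.
Qed.

Lemma max1_ge1 (R : realDomainType) (x : R) : 1 <= Num.max 1 x.
Proof. by rewrite le_max lexx. Qed.

Lemma max1_ge (R : realDomainType) (x : R) : x <= Num.max 1 x.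
Proof. by rewrite le_max lexx orbT. Qed.

Section HornerBounds.
Variables (R : realType) (L : fieldType) (av : L -> R).
Hypothesis hav : is_absval av.
Variables (p : {poly L}) (d : nat).
Hypothesis size_p : size p = d.+1.

Lemma av_monomial_le (i : 'I_d.+1) y :
  av (p`_i * y ^+ i) <= av p`_i * Num.max 1 (av y) ^+ d.
Proof.
set m := Num.max 1 (av y); have m1 : 1 <= m := max1_ge1 (av y).
rewrite (avM hav) (avX hav) ler_wpM2l ?(av_ge0 hav) //.
apply: le_trans (_ : m ^+ i <= m ^+ d).
  by rewrite lerXn2r ?nnegrE ?(av_ge0 hav) ?(le_trans ler01 m1) ?max1_ge.
exact: ler_weXn2l m1 _ _ (ltnSE (ltn_ord i)).
Qed.

Lemma le_mul_max1X (C : R) y : 1 <= C -> 1 <= C * Num.max 1 (av y) ^+ d.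
Proof. by move=> C1; rewrite -[leLHS]mulr1 ler_pM ?exprn_ege1 ?max1_ge1. Qed.

Lemma max1_horner_le_sum (C : R) : 1 <= C -> \sum_(i < d.+1) av p`_i <= C ->
  forall y, Num.max 1 (av p.[y]) <= C * Num.max 1 (av y) ^+ d.
Proof.
move=> C1 hC y; rewrite ge_max le_mul_max1X //= horner_coef size_p.
apply: le_trans; first exact: av_sum.
apply: le_trans (_ : \sum_(i < d.+1) av p`_i * Num.max 1 (av y) ^+ d <= _).
  by apply: ler_sum => i _; apply: av_monomial_le.
by rewrite -mulr_suml ler_wpM2r ?exprn_ge0 // (le_trans ler01 (max1_ge1 (av y))).
Qed.

Lemma max1_horner_le_max (C : R) : nonarch av -> 1 <= C ->
    (forall i : 'I_d.+1, av p`_i <= C) ->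
  forall y, Num.max 1 (av p.[y]) <= C * Num.max 1 (av y) ^+ d.
Proof.
move=> na C1 hC y; rewrite ge_max le_mul_max1X //= horner_coef size_p.
apply: (av_sum_nonarch hav na); first by rewrite (le_trans ler01) ?le_mul_max1X.
move=> i; apply: le_trans (av_monomial_le i y) _.
by rewrite ler_wpM2r ?exprn_ge0 ?(le_trans ler01 (max1_ge1 (av y))).
Qed.

End HornerBounds.

Definition roots_separated (R : realType) (L : fieldType) (av : L -> R)
    (alpha : seq L) (B c : R) : Prop :=
  forall y, c < av y -> exists2 t, 0 <= t /\ B * av y <= c * t &
    forall a, a \in alpha -> t <= av (y - a).

Section FactoredLowerBound.
Variables (R : realType) (L : fieldType) (av : L -> R).
Hypothesis hav : is_absval av.
Variables (lc : L) (alpha : seq L).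

Lemma av_horner_factored_ge y (t : R) : 0 <= t ->
    (forall a, a \in alpha -> t <= av (y - a)) ->
  av lc * t ^+ size alpha <= av (lc *: \prod_(a <- alpha) ('X - a%:P)).[y].
Proof.
move=> t0 ht; rewrite hornerZ horner_prod (avM hav) ler_wpM2l ?(av_ge0 hav) //.
under eq_bigr do rewrite hornerXsubC.
rewrite (av_prod hav); elim: alpha ht => [|a al IH] ht; first by rewrite big_nil.
rewrite big_cons exprS ler_pM ?exprn_ge0 ?ht ?mem_head //.
by apply: IH => b hb; rewrite ht // in_cons hb orbT.
Qed.

Lemma max1X_le_horner_factored (c B : R) :
    1 <= c -> 0 <= B -> B ^+ size alpha * av lc = 1 -> roots_separated av alpha B c ->
  forall y, Num.max 1 (av y) ^+ size alpha
    <= c ^+ size alpha * Num.max 1 (av (lc *: \prod_(a <- alpha) ('X - a%:P)).[y]).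
Proof.
move=> c1 B0 hB ht y; set d := size alpha; set q := _ *: _.
have cd1 : 1 <= c ^+ d by apply: exprn_ege1.
have c0 : 0 <= c := le_trans ler01 c1.
have [yc|cy] := leP (av y) c.
  apply: (@le_trans _ _ (c ^+ d)).
    by rewrite lerXn2r ?nnegrE ?ge_max ?c1 ?yc // (le_trans ler01 (max1_ge1 (av y))).
  by rewrite ler_peMr ?max1_ge1 // (le_trans ler01 cd1).
have [t [t0 hBt] hta] := ht y cy.
rewrite (max_idPr (ltW (le_lt_trans c1 cy))).
apply: (@le_trans _ _ (c ^+ d * av q.[y])); last first.
  by rewrite ler_wpM2l ?exprn_ge0 ?max1_ge.
apply: le_trans (ler_wpM2l (exprn_ge0 d c0) (av_horner_factored_ge t0 hta)).
rewrite mulrCA -exprMn -[leLHS]mul1r -hB mulrAC -exprMn mulrC ler_wpM2l ?(av_ge0 hav) //.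
by rewrite lerXn2r ?nnegrE ?mulr_ge0 ?(av_ge0 hav).
Qed.

End FactoredLowerBound.

Section RootsSeparated.
Variables (R : realType) (L : fieldType) (av : L -> R).
Hypothesis hav : is_absval av.
Variables (alpha : seq L) (A B c : R).
Hypothesis roots_le : forall a, a \in alpha -> av a <= A.

Lemma roots_separated_nonarch : nonarch av -> A <= c -> B <= c ->
  roots_separated av alpha B c.
Proof.
move=> na Ac Bc y cy; exists (av y); first by rewrite av_ge0 ?ler_wpM2r ?(av_ge0 hav).
move=> a ha; apply: (av_subr_nonarch na).
exact: le_lt_trans (roots_le ha) (le_lt_trans Ac cy).
Qed.

Lemma roots_separated_arch : 0 <= A -> 0 <= B -> A + B <= c ->
  roots_separated av alpha B c.
Proof.
move=> A0 B0 ABc y cy; exists (av y - A).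
  split; first lra.
  have yc : 0 <= av y - c by lra.
  have cAB : 0 <= c - (A + B) by lra.
  have := mulr_ge0 A0 yc; have := mulr_ge0 cAB (av_ge0 hav y); nra.
by move=> a ha; have := roots_le ha; have := av_subr_ge hav y a; lra.
Qed.

End RootsSeparated.

Section GeometricSteps.
Variables (R : realType) (D : R).
Hypothesis D_gt1 : 1 < D.

Let D_gt0 : 0 < D := lt_trans ltr01 D_gt1.

Lemma cvg_mulr_invX (k : R) : (fun n => k * D ^- n) @ \oo --> 0.
Proof.
rewrite (_ : (fun n => _) = geometric k D^-1); last first.
  by apply/funext => n; rewrite /= exprVn.
by apply: cvg_geometric; rewrite ger0_norm ?invr_ge0 ?ltW // invf_lt1.
Qed.

Lemma cvgn_addr_invX (v : R ^nat) (k : R) : cvgn v ->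
  cvgn (fun n => v n + k * D ^- n) /\ limn (fun n => v n + k * D ^- n) = limn v.
Proof.
move=> cv; have ck : cvgn (fun n => k * D ^- n) by apply/cvg_ex; exists 0; exact: cvg_mulr_invX.
split; first exact: is_cvgD.
by rewrite limD // (cvg_lim _ (cvg_mulr_invX k)) ?addr0.
Qed.

Lemma invX_tail_unfold (k : R) n :
  k / (D - 1) * D ^- n = k * D ^- n.+1 + k / (D - 1) * D ^- n.+1.
Proof.
have Dn : D ^+ n != 0 by rewrite expf_neq0 // gt_eqF.
by rewrite exprS invfM; field; rewrite Dn !gt_eqF ?subr_gt0.
Qed.

Lemma limn_le_of_step (u : R ^nat) (a : R) : 0 <= a -> (forall n, 0 <= u n) ->
    (forall n, u n.+1 <= u n + a * D ^- n.+1) ->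
  cvgn u /\ limn u <= u 0%N + a / (D - 1).
Proof.
move=> a0 u0 hu; pose q n := u n + a / (D - 1) * D ^- n.
have q_noninc : {homo q : n m / (n <= m)%N >-> m <= n}.
  apply: (homo_leq (r := fun x y => y <= x)) => [//|? ? ? h1 h2|n].
    exact: le_trans h2 h1.
  by rewrite /q [in leRHS]invX_tail_unfold addrA lerD2r hu.
have cq : cvgn q.
  apply: nonincreasing_is_cvgn => //; exists 0 => _ [n _ <-].
  have D1_ge0 : 0 <= D - 1 by rewrite subr_ge0 ltW.
  by rewrite addr_ge0 // mulr_ge0 ?divr_ge0 // invr_ge0 exprn_ge0 // ltW.
have uE : (fun n => q n + - (a / (D - 1)) * D ^- n) = u.
  by apply/funext => n; rewrite /q mulNr addrK.
have [cu limE] := cvgn_addr_invX (- (a / (D - 1))) cq; rewrite uE in cu limE.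
split => //; rewrite limE.
by have := nonincreasing_cvgn_ge q_noninc cq 0%N; rewrite /q expr0 invr1 mulr1.
Qed.

Lemma limn_ge_of_step (u : R ^nat) (b : R) : cvgn u ->
    (forall n, u n - b * D ^- n.+1 <= u n.+1) ->
  u 0%N - b / (D - 1) <= limn u.
Proof.
move=> cu hu; pose r n := u n + - (b / (D - 1)) * D ^- n.
have r_nondecr : {homo r : n m / (n <= m)%N >-> n <= m}.
  apply: (homo_leq (r := fun x y => x <= y)) => [//|? ? ?|n]; first exact: le_trans.
  by rewrite /r !mulNr [in leLHS]invX_tail_unfold opprD addrA lerD2r.
have [cr <-] := cvgn_addr_invX (- (b / (D - 1))) cu.
by have := nondecreasing_cvgn_le r_nondecr cr 0%N; rewrite /r expr0 invr1 mulr1.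
Qed.

Lemma limn_iter_bounds (T : Type) (f : T -> T) (H : T -> R) (a b : R) :
    0 <= a -> (forall y, 0 <= H y) ->
    (forall y, H (f y) <= a + D * H y) ->
    (forall y, D * H y - b <= H (f y)) ->
  forall x, - b / (D - 1) <= limn (fun n => D ^- n * H (iter n f x)) - H x
                          <= a / (D - 1).
Proof.
move=> a0 H0 Hup Hlo x; set u := fun n => _.
have DS n : D ^- n = D * D ^- n.+1.
  by rewrite exprS invfM mulrA mulfV ?mul1r // gt_eqF.
have Dn_gt0 n : 0 < D ^- n by rewrite invr_gt0 exprn_gt0.
have u0 : u 0%N = H x by rewrite /u expr0 invr1 mul1r.
have [cu le_lim] : cvgn u /\ limn u <= u 0%N + a / (D - 1).
  apply: limn_le_of_step => // [n|n].
    exact: mulr_ge0 (ltW (Dn_gt0 n)) (H0 _).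
  rewrite /u iterS (DS n); set z := iter n f x.
  have -> : D / D ^+ n.+1 * H z + a / D ^+ n.+1 = D ^- n.+1 * (a + D * H z) by ring.
  by rewrite ler_wpM2l ?(ltW (Dn_gt0 _)).
have ge_lim : u 0%N - b / (D - 1) <= limn u.
  apply: limn_ge_of_step => // n.
  rewrite /u iterS (DS n); set z := iter n f x.
  have -> : D / D ^+ n.+1 * H z - b / D ^+ n.+1 = D ^- n.+1 * (D * H z - b) by ring.
  by rewrite ler_wpM2l ?(ltW (Dn_gt0 _)).
rewrite u0 in le_lim ge_lim; rewrite mulNr; apply/andP; split; lra.
Qed.

End GeometricSteps.

Lemma powR_oppV_exprnK (R : realType) (x : R) (d : nat) : (0 < d)%N -> 0 < x ->
  (x `^ (- d%:R^-1)) ^+ d * x = 1.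
Proof.
move=> d0 x0; rewrite -powR_mulrn ?powR_ge0 // -powRrM mulNr mulVf ?pnatr_eq0 -?lt0n //.
by rewrite -[-1]/(1 *- 1) powR_invn ?ltW // expr1 mulVf ?gt_eqF.
Qed.

Section Heights.
Variables (R : realType) (L : fieldType) (av : L -> R).

Lemma loc_height_ge0 y : 0 <= loc_height av y.
Proof. by rewrite ln_ge0 ?max1_ge1. Qed.

Lemma loc_height_le_of_max1 (f : L -> L) (d : nat) (C : R) : 1 <= C ->
    (forall y, Num.max 1 (av (f y)) <= C * Num.max 1 (av y) ^+ d) ->
  forall y, loc_height av (f y) <= ln C + d%:R * loc_height av y.
Proof.
move=> C1 hf y.
have C0 : 0 < C := lt_le_trans ltr01 C1.
have M_gt0 (z : L) : 0 < Num.max 1 (av z) := lt_le_trans ltr01 (max1_ge1 (av z)).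
rewrite /loc_height mulr_natl -lnXn // -lnM ?posrE ?exprn_gt0 //.
by rewrite ler_ln ?posrE ?mulr_gt0 ?exprn_gt0.
Qed.

Lemma loc_height_ge_of_max1 (f : L -> L) (d : nat) (c : R) : 1 <= c ->
    (forall y, Num.max 1 (av y) ^+ d <= c ^+ d * Num.max 1 (av (f y))) ->
  forall y, d%:R * loc_height av y - d%:R * ln c <= loc_height av (f y).
Proof.
move=> c1 hf y; have c0 : 0 < c := lt_le_trans ltr01 c1.
have M_gt0 (z : L) : 0 < Num.max 1 (av z) := lt_le_trans ltr01 (max1_ge1 (av z)).
rewrite /loc_height !mulr_natl -!lnXn // lerBlDl -lnM ?posrE ?exprn_gt0 //.
by rewrite ler_ln ?posrE ?mulr_gt0 ?exprn_gt0.
Qed.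

End Heights.

Lemma can_height_sub_loc_height_bounds (R : realType) (L : fieldType) (av : L -> R)
    (p : {poly L}) (d : nat) (c C : R) :
  (1 < d)%N -> size p = d.+1 -> 1 <= c -> 1 <= C ->
  (forall y, Num.max 1 (av p.[y]) <= C * Num.max 1 (av y) ^+ d) ->
  (forall y, Num.max 1 (av y) ^+ d <= c ^+ d * Num.max 1 (av p.[y])) ->
  forall x, - (d%:R * ln c) / (d%:R - 1) <= can_height av p x - loc_height av x
         /\ can_height av p x - loc_height av x <= ln C / (d%:R - 1).
Proof.
move=> d1 size_p c1 C1 hup hlo x; rewrite /can_height size_p /=.
have D1 : 1 < d%:R :> R by rewrite ltr1n.
have := limn_iter_bounds D1 (ln_ge0 C1) (@loc_height_ge0 _ _ av)
  (loc_height_le_of_max1 C1 hup) (loc_height_ge_of_max1 c1 hlo) x.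
by rewrite mulNr => /andP.
Qed.

Section Constants.
Variables (R : realType) (K : fieldType) (L : closedFieldType).
Variables (s : {rmorphism K -> L}) (av : L -> R).
Hypothesis hav : is_absval av.

Definition cv (A B : R) : R :=
  if `[< nonarch (av \o s) >] then Num.max 1 (Num.max A B) else Num.max 1 (A + B).

Definition Cv (phi : {poly K}) (d : nat) : R :=
  if `[< nonarch (av \o s) >] then \big[Num.max/1]_(i < d.+1) av (s phi`_i)
  else Num.max 1 (\sum_(i < d.+1) av (s phi`_i)).

Lemma max1_horner_le_Cv (phi : {poly K}) (d : nat) : size phi = d.+1 ->
  1 <= Cv phi d /\ forall y,
    Num.max 1 (av (map_poly s phi).[y]) <= Cv phi d * Num.max 1 (av y) ^+ d.
Proof.
move=> size_phi; have size_p : size (map_poly s phi) = d.+1 by rewrite size_map_poly.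
have coef_p i : (map_poly s phi)`_i = s phi`_i by rewrite coef_map.
rewrite /Cv; case: asboolP => [na|_].
  have C1 : 1 <= \big[Num.max/1]_(i < d.+1) av (s phi`_i).
    by elim/big_rec: _ => // i z _ h; rewrite le_max h orbT.
  split => //; apply: (max1_horner_le_max hav size_p (nonarch_rmorph hav na)) => // i.
  by rewrite coef_p (le_bigmax _ (fun i : 'I_d.+1 => av (s phi`_i))).
split; first exact: max1_ge1.
apply: (max1_horner_le_sum hav size_p); first exact: max1_ge1.
by under eq_bigr do rewrite coef_p; apply: max1_ge.
Qed.

Lemma max1X_le_cv (lc : L) (alpha : seq L) (d : nat) :
  (0 < d)%N -> lc != 0 -> size alpha = d ->
  let A := \big[Num.max/0]_(a <- alpha) av a in
  let B := av lc `^ (- (d%:R)^-1) in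
  1 <= cv A B /\ forall y, Num.max 1 (av y) ^+ d
    <= cv A B ^+ d * Num.max 1 (av (lc *: \prod_(a <- alpha) ('X - a%:P)).[y]).
Proof.
move=> d0 lc_neq0 size_alpha A B; subst d.
have c1 : 1 <= cv A B by rewrite /cv; case: ifP => _; apply: max1_ge1.
split => //.
have roots_le a : a \in alpha -> av a <= A by move=> ha; apply: le_bigmax_seq.
have A0 : 0 <= A by rewrite /A; elim/big_rec: _ => // a z _ h; rewrite le_max h orbT.
have B0 : 0 <= B by apply: powR_ge0.
apply: (max1X_le_horner_factored (B := B) hav) => //.
  by rewrite /B powR_oppV_exprnK ?(av_gt0 hav).
rewrite /cv; case: asboolP => [na|_].
  by apply: (roots_separated_nonarch hav roots_le (nonarch_rmorph hav na)); rewrite ?le_max ?lexx ?orbT.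
by apply: (roots_separated_arch hav roots_le); rewrite ?max1_ge.
Qed.

End Constants.

Theorem proposition2p1 (R : realType) (K : fieldType) (L : closedFieldType)
    (s : {rmorphism K -> L}) (av : L -> R) (d : nat) (phi : {poly K})
    (alpha : seq L) :
  is_Cv s av ->
  (2 <= d)%N ->
  size phi = d.+1 ->
  map_poly s phi = s (lead_coef phi) *: \prod_(a <- alpha) ('X - a%:P) ->
  let A := \big[Num.max/0]_(a <- alpha) av a in
  let B := av (s (lead_coef phi)) `^ (- (d%:R)^-1) in
  let c := if `[< nonarch (av \o s) >]
           then Num.max 1 (Num.max A B) else Num.max 1 (A + B) in
  let C := if `[< nonarch (av \o s) >]
           then \big[Num.max/1]_(i < d.+1) av (s phi`_i)
           else Num.max 1 (\sum_(i < d.+1) av (s phi`_i)) in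
  forall x : L,
    - (d%:R * ln c) / (d%:R - 1) <= can_height av (map_poly s phi) x - loc_height av x
    /\ can_height av (map_poly s phi) x - loc_height av x <= ln C / (d%:R - 1).
Proof.
move=> [hav _ _] d2 size_phi phiE A B c C x.
have lc_neq0 : s (lead_coef phi) != 0.
  by rewrite fmorph_eq0 lead_coef_eq0 -size_poly_eq0 size_phi.
have size_alpha : size alpha = d.
  have := size_map_poly s phi; rewrite phiE size_scale // size_prod_XsubC size_phi.
  by move=> -[].
have [C1 upper] := max1_horner_le_Cv s hav size_phi.
have [c1 lower] := max1X_le_cv s hav (ltnW d2) lc_neq0 size_alpha.
rewrite -phiE in lower.
have size_p : size (map_poly s phi) = d.+1 by rewrite size_map_poly.
exact: (can_height_sub_loc_height_bounds d2 size_p c1 C1 upper lower).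
Qed.
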